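(* Let $G=\bigl((f_j)_{j=1}^n;(\mu^{R})_{\emptyset\ne R\subseteq[n]}\bigr)$ be an $n$-resource selection game, and treat $\mathrm{undefined}$ as $-\infty$ in maxima. (a) $\max_{\emptyset\ne S\subseteq[n]}E_G(S)$ is a real number. (b) If $f_1,\ldots,f_n$ are continuous, then $h_G=\max_{\emptyset\ne S\subseteq[n]}E_G(S)$.
   Context: An $n$-resource selection game is $G=\bigl((f_j)_{j=1}^n;(\mu^{R})_{\emptyset\ne R\subseteq[n]}\bigr)$ with each $f_j:[0,\infty)\to\mathbb{R}$ nondecreasing and each $\mu^R\ge0$. Equalization: for nondecreasing $g_1,\ldots,g_m:[0,\infty)\to\mathbb{R}\cup\{\mathrm{undefined}\}$, $\mathrm{eq}(g_1,\ldots,g_m)(\mu)=g_1(\mu_1)$ if there exist $\mu_1,\ldots,\mu_m\ge0$ summing to $\mu$ with $g_1(\mu_1)=\cdots=g_m(\mu_m)\in\mathbb{R}$, else $\mathrm{undefined}$. For nonempty $S\subseteq[n]$: $E_G(S)=\mathrm{eq}(f_k:k\in S)\bigl(\sum_{\emptyset\ne R\subseteq S}\mu^R\bigr)$; $M_G(S)$ is the set of nonempty $S'\subseteq S$ such that for every $0\le\mu\le\sum_{R\subseteq S,\,R\cap S'\ne\emptyset}\mu^R$, $\mathrm{eq}(f_k:k\in S')(\mu)\ne E_G(S)$ ($\mathrm{undefined}$ differs from every real); $D_G=\{S: E_G(S)\in\mathbb{R},\ M_G(S)=\emptyset\}$; $h_G=\max_{S\in D_G}E_G(S)$. *)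

From Stdlib Require Import Reals ClassicalEpsilon.
From mathcomp Require Import all_boot.
Set Implicit Arguments. Unset Strict Implicit. Unset Printing Implicit Defensive.
Local Open Scope R_scope.

Definition sumR (X : Type) (s : seq X) (F : X -> R) : R :=
  foldr (fun x acc => F x + acc) 0 s.

(* An n-resource selection game: cost functions f_j (j in [n] = 'I_n),
   considered on [0,oo), and masses mu^R for nonempty R subset of [n]
   (the value of mu at set0 is never used). *)
Record game (n : nat) := Game {
  cost : 'I_n -> R -> R;
  mass : {set 'I_n} -> R }.

Definition valid_game (n : nat) (G : game n) : Prop :=
  (forall j x y, 0 <= x -> x <= y -> cost G j x <= cost G j y) /\
  (forall Rs : {set 'I_n}, Rs != set0 -> 0 <= mass G Rs).

Definition continuous_on_nonneg (g : R -> R) : Prop :=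
  forall x, 0 <= x -> forall eps, 0 < eps -> exists delta, 0 < delta /\
    forall y, 0 <= y -> Rabs (y - x) < delta -> Rabs (g y - g x) < eps.

Definition is_eq (n : nat) (g : 'I_n -> R -> R) (S : {set 'I_n}) (m0 v : R) : Prop :=
  exists m : 'I_n -> R,
    (forall k, k \in S -> 0 <= m k) /\
    sumR (enum S) m = m0 /\
    (forall k, k \in S -> g k (m k) = v).

(* eq(g_k : k in S)(m0); None encodes "undefined".  (For nonempty S and
   nondecreasing g the value is unique, so the choice is irrelevant.) *)
Definition eqv (n : nat) (g : 'I_n -> R -> R) (S : {set 'I_n}) (m0 : R) : option R :=
  match excluded_middle_informative (exists v, is_eq g S m0 v) with
  | left H => Some (proj1_sig (constructive_indefinite_description _ H))
  | right _ => None
  end.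

Definition sum_mu (n : nat) (G : game n) (P : {set 'I_n} -> bool) : R :=
  sumR (enum [set Rs : {set 'I_n} | (Rs != set0) && P Rs]) (mass G).

Definition E_G (n : nat) (G : game n) (S : {set 'I_n}) : option R :=
  eqv (cost G) S (sum_mu G (fun Rs => Rs \subset S)).

Definition in_M_G (n : nat) (G : game n) (S S' : {set 'I_n}) : Prop :=
  S' != set0 /\ S' \subset S /\
  forall m0, 0 <= m0 ->
    m0 <= sum_mu G (fun Rs => (Rs \subset S) && (Rs :&: S' != set0)) ->
    eqv (cost G) S' m0 <> E_G G S.

Definition in_D_G (n : nat) (G : game n) (S : {set 'I_n}) : Prop :=
  S != set0 /\ (exists v, E_G G S = Some v) /\ ~ (exists S', in_M_G G S S').

Definition in_D_Gb (n : nat) (G : game n) (S : {set 'I_n}) : bool :=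
  if excluded_middle_informative (in_D_G G S) then true else false.

(* maximum in R u {-oo}, with None = undefined = -oo *)
Definition maxopt (a b : option R) : option R :=
  match a, b with
  | None, _ => b
  | _, None => a
  | Some x, Some y => Some (Rmax x y)
  end.

Definition maxoptL (s : seq (option R)) : option R := foldr maxopt None s.

Definition maxE (n : nat) (G : game n) : option R :=
  maxoptL [seq E_G G T | T <- enum [set: {set 'I_n}] & T != set0].

Definition h_G (n : nat) (G : game n) : option R :=
  maxoptL [seq E_G G T | T <- enum [set: {set 'I_n}] & in_D_Gb G T].

From Stdlib Require Import Reals Lra ClassicalEpsilon Classical.
From mathcomp Require Import all_boot zify.
Set Implicit Arguments. Unset Strict Implicit.
Local Open Scope R_scope.

(** (a) A singleton [{j}] is equalized by putting all its mass on [j], so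
    the maximum [M] of [E_G] is a real number.
    (b) Let [E_G(S) = M] with [S] not in [D_G], and pick [S'] in [M_G(S)].
    The masses of the [R \subset S] meeting [S'] cannot lift [S'] to level
    [M], so the masses inside [T = S :\: S'] exceed what the equalization of
    [S] puts on [T].  Since the costs are continuous, [T] can be equalized by
    water filling starting from that configuration, at a level [>= M], hence
    [= M] by maximality.  Descending along strictly smaller sets ends in
    [D_G], so [h_G >= M]; the converse inequality is trivial. *)

Section FiniteSums.
Variable X : eqType.
Implicit Types (s : seq X) (F : X -> R).

Lemma sumR_nil F : sumR [::] F = 0.
Proof. by []. Qed.

Lemma sumR_cons x s F : sumR (x :: s) F = F x + sumR s F.
Proof. by []. Qed.

Lemma sumR_add s F F' : sumR s (fun x => F x + F' x) = sumR s F + sumR s F'.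
Proof. elim: s => [|x s IH]; rewrite ?sumR_nil ?sumR_cons ?IH; lra. Qed.

Lemma eq_sumR s F F' : (forall x, x \in s -> F x = F' x) -> sumR s F = sumR s F'.
Proof.
elim: s => [//|x s IH] eqF; rewrite !sumR_cons eqF ?mem_head // IH // => y ys.
by apply: eqF; rewrite in_cons ys orbT.
Qed.

Lemma ler_sumR s F F' : (forall x, x \in s -> F x <= F' x) -> sumR s F <= sumR s F'.
Proof.
elim: s => [|x s IH] leF; rewrite ?sumR_nil ?sumR_cons; first lra.
have := leF x (mem_head _ _).
have : sumR s F <= sumR s F' by apply: IH => y ys; apply: leF; rewrite in_cons ys orbT.
lra.
Qed.

Lemma ltr_sumR s F F' : s <> [::] ->
  (forall x, x \in s -> F x < F' x) -> sumR s F < sumR s F'.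
Proof.
case: s => [//|x s] _ ltF; rewrite !sumR_cons.
have := ltF x (mem_head _ _).
have : sumR s F <= sumR s F'.
  by apply: ler_sumR => y ys; apply/Rlt_le/ltF; rewrite in_cons ys orbT.
lra.
Qed.

Lemma sumR_eq0 s F : (forall x, x \in s -> F x = 0) -> sumR s F = 0.
Proof.
move=> F0; rewrite (eq_sumR F0); elim: s {F0} => [//|x s IH].
rewrite sumR_cons IH; lra.
Qed.

Lemma sumR_ge0 s F : (forall x, x \in s -> 0 <= F x) -> 0 <= sumR s F.
Proof.
by move=> F0; rewrite -(@sumR_eq0 s (fun _ => 0)) //; apply: ler_sumR.
Qed.

Lemma ler_mem_sumR s F x :
  x \in s -> (forall y, y \in s -> 0 <= F y) -> F x <= sumR s F.
Proof.
elim: s => [//|y s IH] xs F0; rewrite sumR_cons.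
have F0s : forall z, z \in s -> 0 <= F z.
  by move=> z zs; apply: F0; rewrite in_cons zs orbT.
move: xs; rewrite in_cons => /orP [/eqP ->|xs].
- have := sumR_ge0 F0s; lra.
- have := IH xs F0s; have := F0 y (mem_head _ _); lra.
Qed.

Lemma sumR_filter (p : pred X) s F :
  sumR (filter p s) F = sumR s (fun x => if p x then F x else 0).
Proof. elim: s => [//|x s IH] /=; case: (p x); rewrite ?sumR_cons IH //; lra. Qed.

Lemma sumR_approx_left s (F : X -> R -> R) (a : X -> R) v :
  (forall k eps, k \in s -> 0 < eps ->
     exists u, u < v /\ forall w, u < w -> a k - eps <= F k w) ->
  forall eps, 0 < eps ->
  exists u, u < v /\ forall w, u < w -> sumR s a - eps <= sumR s (fun k => F k w).
Proof.
elim: s => [|k s IH] approx eps eps0.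
  by exists (v - 1); split=> [|w _]; rewrite ?sumR_nil; lra.
have [u1 [u1v H1]] := approx k (eps / 2) (mem_head _ _) ltac:(lra).
have [u2 [u2v H2]] : exists u, u < v /\
    forall w, u < w -> sumR s a - eps / 2 <= sumR s (fun k => F k w).
  by apply: IH; [move=> j e js; apply: approx; rewrite in_cons js orbT|lra].
exists (Rmax u1 u2); split => [|w uw]; first exact: Rmax_lub_lt.
rewrite !sumR_cons.
have := H1 w (Rle_lt_trans _ _ _ (Rmax_l _ _) uw).
have := H2 w (Rle_lt_trans _ _ _ (Rmax_r _ _) uw).
lra.
Qed.

Lemma sumR_approx_right s (F : X -> R -> R) (a : X -> R) v :
  (forall k eps, k \in s -> 0 < eps ->
     exists w, v < w /\ forall u, u < w -> F k u <= a k + eps) ->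
  forall eps, 0 < eps ->
  exists w, v < w /\ forall u, u < w -> sumR s (fun k => F k u) <= sumR s a + eps.
Proof.
elim: s => [|k s IH] approx eps eps0.
  by exists (v + 1); split=> [|u _]; rewrite ?sumR_nil; lra.
have [w1 [vw1 H1]] := approx k (eps / 2) (mem_head _ _) ltac:(lra).
have [w2 [vw2 H2]] : exists w, v < w /\
    forall u, u < w -> sumR s (fun k => F k u) <= sumR s a + eps / 2.
  by apply: IH; [move=> j e js; apply: approx; rewrite in_cons js orbT|lra].
exists (Rmin w1 w2); split => [|u uw]; first exact: Rmin_glb_lt.
rewrite !sumR_cons.
have := H1 u (Rlt_le_trans _ _ _ uw (Rmin_l _ _)).
have := H2 u (Rlt_le_trans _ _ _ uw (Rmin_r _ _)).
lra.
Qed.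

Lemma exists_min_seq s F : s <> [::] ->
  exists2 k, k \in s & forall j, j \in s -> F k <= F j.
Proof.
elim: s => [//|k [|k' s] IH] _.
  by exists k; rewrite ?mem_head // => j; rewrite mem_seq1 => /eqP ->; lra.
have [m ms minm] := IH ltac:(by []).
have [Fkm|Fmk] := Rle_lt_dec (F k) (F m).
- exists k; first exact: mem_head.
  move=> j; rewrite in_cons => /orP [/eqP ->|js]; first lra.
  have := minm j js; lra.
- exists m; first by rewrite in_cons ms orbT.
  by move=> j; rewrite in_cons => /orP [/eqP ->|js]; [lra|apply: minm].
Qed.

Lemma sumR_interpolate s (a b : X -> R) c : uniq s ->
  (forall k, k \in s -> a k <= b k) -> sumR s a <= c <= sumR s b ->
  exists2 x : X -> R, (forall k, k \in s -> a k <= x k <= b k) & sumR s x = c.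
Proof.
elim: s c => [|k s IH] c.
  by move=> _ _; rewrite !sumR_nil => c0; exists a => //; rewrite sumR_nil; lra.
rewrite cons_uniq => /andP [ks us] ab; rewrite !sumR_cons => cab.
have ab' : forall j, j \in s -> a j <= b j.
  by move=> j js; apply: ab; rewrite in_cons js orbT.
have := ler_sumR ab'; have := ab k (mem_head _ _) => abk sab.
(* this choice of [xk] leaves a remainder [c - xk] in [[sumR s a, sumR s b]] *)
set xk := Rmax (a k) (c - sumR s b).
have xk_lb : a k <= xk /\ c - sumR s b <= xk by split; [apply: Rmax_l|apply: Rmax_r].
have xk_ub : xk <= b k /\ xk <= c - sumR s a by split; apply: Rmax_lub; lra.
have [x' x'ab x'c] := IH (c - xk) us ab' ltac:(lra).
have jk : forall j, j \in s -> (j == k) = false.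
  by move=> j js; apply/eqP => jk; rewrite -jk js in ks.
exists (fun j => if j == k then xk else x' j).
- move=> j; rewrite in_cons => /orP [/eqP ->|js]; first by rewrite eqxx; lra.
  by rewrite jk //; apply: x'ab.
- rewrite sumR_cons eqxx (@eq_sumR _ _ x'); first lra.
  by move=> j js; rewrite jk.
Qed.

End FiniteSums.

Lemma sumR_enum (T : finType) (A : {pred T}) (F : T -> R) :
  sumR (enum A) F = sumR (Finite.enum T) (fun x => if x \in A then F x else 0).
Proof. by rewrite /enum_mem sumR_filter. Qed.

Definition supR (E : R -> Prop) : R :=
  match excluded_middle_informative (bound E /\ exists x, E x) with
  | left h => proj1_sig (completeness E (proj1 h) (proj2 h))
  | right _ => 0
  end.

Lemma supR_lub E : bound E -> (exists x, E x) -> is_lub E (supR E).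
Proof.
move=> bE neE; rewrite /supR.
case: excluded_middle_informative => [h|[]]; last by split.
by case: (completeness E _ _).
Qed.

Lemma is_lub_approx E m eps : is_lub E m -> 0 < eps -> exists x, E x /\ m - eps < x.
Proof.
move=> [ubm leastm] eps0; apply: NNPP => noE.
have : m <= m - eps; last lra.
apply: leastm => x Ex; apply: Rnot_lt_le => lt_x; apply: noE; by exists x.
Qed.

Definition monotone_nonneg (g : R -> R) : Prop :=
  forall x y, 0 <= x -> x <= y -> g x <= g y.

(** [upper_inv g B v] and [lower_inv g B v] are the right and left ends of
    the interval of [[0, B]] on which a nondecreasing [g] takes the value [v];
    the point [0] is admitted into both defining sets to keep them nonempty. *)
Definition sublevel (g : R -> R) (B v x : R) : Prop :=
  0 <= x <= B /\ (x = 0 \/ g x <= v).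

Definition strict_sublevel (g : R -> R) (B v x : R) : Prop :=
  0 <= x <= B /\ (x = 0 \/ g x < v).

Definition upper_inv (g : R -> R) (B v : R) : R := supR (sublevel g B v).
Definition lower_inv (g : R -> R) (B v : R) : R := supR (strict_sublevel g B v).

Section LevelInverses.
Variables (g : R -> R) (B : R).
Hypothesis B0 : 0 <= B.

Lemma upper_inv_lub v : is_lub (sublevel g B v) (upper_inv g B v).
Proof.
apply: supR_lub; last by exists 0; split; [lra|left].
by exists B => x [[]].
Qed.

Lemma lower_inv_lub v : is_lub (strict_sublevel g B v) (lower_inv g B v).
Proof.
apply: supR_lub; last by exists 0; split; [lra|left].
by exists B => x [[]].
Qed.

Lemma upper_inv_bounds v : 0 <= upper_inv g B v <= B.
Proof.
have [ub least] := upper_inv_lub v.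
by split; [apply: ub; split; [lra|left]|apply: least => x [[]]].
Qed.

Lemma lower_inv_bounds v : 0 <= lower_inv g B v <= B.
Proof.
have [ub least] := lower_inv_lub v.
by split; [apply: ub; split; [lra|left]|apply: least => x [[]]].
Qed.

Lemma lower_inv_le_upper_inv v : lower_inv g B v <= upper_inv g B v.
Proof.
have [ub _] := upper_inv_lub v; have [_ least] := lower_inv_lub v.
by apply: least => x [x0B [x0|gx]]; apply: ub; split=> //; [left|right; lra].
Qed.

Lemma upper_inv_top v : g B <= v -> upper_inv g B v = B.
Proof.
move=> gB; have [ub _] := upper_inv_lub v; have := upper_inv_bounds v.
have : B <= upper_inv g B v by apply: ub; split; [lra|right].
lra.
Qed.

Lemma lower_inv_le v m : monotone_nonneg g -> 0 <= m -> v <= g m ->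
  lower_inv g B v <= m.
Proof.
move=> mono m0 vgm; have [_ least] := lower_inv_lub v.
apply: least => x [x0B [->//|gx]]; apply: Rnot_lt_le => mx.
have := mono m x m0 (Rlt_le _ _ mx); lra.
Qed.

Lemma upper_inv_level v : continuous_on_nonneg g -> g 0 <= v ->
  g (upper_inv g B v) <= v.
Proof.
move=> cont g0; have [ub _] := upper_inv_lub v.
have [u0 uB] := upper_inv_bounds v.
apply: Rnot_lt_le => vgu.
have [d [d0 near]] := cont _ u0 (g (upper_inv g B v) - v) ltac:(lra).
have [x [[[x0 xB] x_below] ux]] := is_lub_approx (upper_inv_lub v) d0.
have xu : x <= upper_inv g B v by apply: ub.
have /Rabs_def2 := near x x0 ltac:(apply: Rabs_def1; lra).
by case: x_below => [->|]; lra.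
Qed.

Lemma lower_inv_level v : continuous_on_nonneg g -> lower_inv g B v < B ->
  v <= g (lower_inv g B v).
Proof.
move=> cont lB; have [ub _] := lower_inv_lub v.
have [l0 _] := lower_inv_bounds v.
apply: Rnot_lt_le => glv.
have [d [d0 near]] := cont _ l0 (v - g (lower_inv g B v)) ltac:(lra).
set y := Rmin (lower_inv g B v + d / 2) B.
have ly : lower_inv g B v < y by apply: Rmin_glb_lt; lra.
have yd : y <= lower_inv g B v + d / 2 := Rmin_l _ _.
have yB : y <= B := Rmin_r _ _.
have : y <= lower_inv g B v; last lra.
apply: ub; split; first lra.
right; have /Rabs_def2 := near y ltac:(lra) ltac:(apply: Rabs_def1; lra).
lra.
Qed.

Lemma inverse_interval_level v x :
  monotone_nonneg g -> continuous_on_nonneg g -> g 0 <= v <= g B ->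
  lower_inv g B v <= x <= upper_inv g B v -> g x = v.
Proof.
move=> mono cont v_range x_range.
have [l0 lB] := lower_inv_bounds v; have [u0 uB] := upper_inv_bounds v.
apply: Rle_antisym.
  apply: Rle_trans (upper_inv_level cont (proj1 v_range)).
  by apply: mono; lra.
have [lB'|l_B] := Rle_lt_dec B (lower_inv g B v).
  have -> : x = B by lra.
  by case: v_range.
apply: Rle_trans (lower_inv_level cont l_B) _.
by apply: mono; lra.
Qed.

Lemma lower_inv_approx_left v eps : 0 < eps ->
  exists u, u < v /\ forall w, u < w -> lower_inv g B v - eps <= lower_inv g B w.
Proof.
move=> eps0.
have [x [[x0B x_below] lx]] := is_lub_approx (lower_inv_lub v) eps0.
have in_set : forall w, (x = 0 \/ g x < w) -> x <= lower_inv g B w.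
  by move=> w xw; have [ub _] := lower_inv_lub w; apply: ub.
case: x_below => [x_0|gx].
- exists (v - 1); split=> [|w _]; first lra.
  have := in_set w (or_introl x_0); lra.
- exists (g x); split=> // w gxw.
  have := in_set w (or_intror gxw); lra.
Qed.

Lemma lower_inv_approx_right v eps : 0 < eps -> monotone_nonneg g ->
  exists w, v < w /\ forall u, u < w -> lower_inv g B u <= upper_inv g B v + eps.
Proof.
move=> eps0 mono; have [u0 uB] := upper_inv_bounds v.
have [Bue|ueB] := Rle_lt_dec B (upper_inv g B v + eps).
  exists (v + 1); split=> [|u _]; first lra.
  have := lower_inv_bounds u; lra.
set y := upper_inv g B v + eps.
have vgy : v < g y.
  apply: Rnot_le_lt => gyv; have [ub _] := upper_inv_lub v.
  have : y <= upper_inv g B v by apply: ub; split; [rewrite /y; lra|right].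
  rewrite /y; lra.
exists (g y); split=> // u ugy.
apply: lower_inv_le => //; first by rewrite /y; lra.
lra.
Qed.

End LevelInverses.

(** Water filling: raise the common level until the masses [x k] that keep
    every [f k] at that level add up to [B].  The level is the supremum of the
    levels at which the [lower_inv]s still fit into [B]. *)
Section Equalization.
Variables (X : eqType) (f : X -> R -> R) (ks : seq X) (B e : R) (mu : X -> R).
Hypotheses (ks_ne : ks <> [::]) (ks_uniq : uniq ks).
Hypothesis f_mono : forall k, k \in ks -> monotone_nonneg (f k).
Hypothesis f_cont : forall k, k \in ks -> continuous_on_nonneg (f k).
Hypothesis mu_level : forall k, k \in ks -> 0 <= mu k /\ f k (mu k) = e.
Hypothesis mu_B : sumR ks mu <= B.

Let lower_sum v := sumR ks (fun k => lower_inv (f k) B v).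
Let upper_sum v := sumR ks (fun k => upper_inv (f k) B v).

Let mu_le_B k : k \in ks -> mu k <= B.
Proof.
move=> kks; have := @ler_mem_sumR _ ks mu k kks (fun j js => proj1 (mu_level js)).
lra.
Qed.

Let B0 : 0 <= B.
Proof.
have [k kks] : exists k, k \in ks by case: ks ks_ne => [//|k s]; exists k; rewrite mem_head.
have := mu_le_B kks; have := mu_level kks; lra.
Qed.

Let cost0_le_e k : k \in ks -> f k 0 <= e.
Proof.
by move=> kks; have [mu0 <-] := mu_level kks; apply: f_mono => //; lra.
Qed.

Section LevelSupremum.
Variable k0 : X.
Hypothesis k0_ks : k0 \in ks.

Let admissible v := e <= v <= f k0 B /\ lower_sum v <= B.
Let level := supR admissible.

Let admissible_e : admissible e.
Proof.
split.
  have [mu0 <-] := mu_level k0_ks.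
  by split; [lra|apply: f_mono => //; apply: mu_le_B].
apply: Rle_trans mu_B; apply: ler_sumR => k kks.
have [mu0 fmu] := mu_level kks.
by apply: lower_inv_le => //; [apply: f_mono|rewrite fmu; lra].
Qed.

Let level_lub : is_lub admissible level.
Proof. by apply: supR_lub; [exists (f k0 B) => v [[]]|exists e]. Qed.

Lemma level_range : e <= level <= f k0 B.
Proof.
have [ub least] := level_lub.
by split; [apply: ub|apply: least => v [[]]].
Qed.

Lemma lower_sum_level : lower_sum level <= B.
Proof.
have [ub least] := level_lub.
apply: Rnot_lt_le => B_lt.
have [u [ulev near]] := @sumR_approx_left _ ks (fun k => lower_inv (f k) B)
  (fun k => lower_inv (f k) B level) level
  (fun k eps _ eps0 => lower_inv_approx_left (f k) B0 level eps0)
  ((lower_sum level - B) / 2) ltac:(lra).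
have [w [adm_w uw]] : exists w, admissible w /\ u < w.
  apply: NNPP => no_w; have : level <= u; last lra.
  apply: least => w adm_w; apply: Rnot_lt_le => uw; apply: no_w; by exists w.
have := near w uw; have [_] := adm_w; rewrite /lower_sum in B_lt *; lra.
Qed.

Lemma upper_sum_level : B <= upper_sum level.
Proof.
have [ub _] := level_lub; have [e_lev lev_top] := level_range.
apply: Rnot_lt_le => lt_B.
have [top|lt_top] := Rle_lt_dec (f k0 B) level.
  have : upper_inv (f k0) B level <= upper_sum level.
    apply: (@ler_mem_sumR _ ks (fun k => upper_inv (f k) B level) k0 k0_ks).
    by move=> j _; case: (upper_inv_bounds (f j) B0 level).
  rewrite upper_inv_top //; lra.
have [w [levw near]] := @sumR_approx_right _ ks (fun k => lower_inv (f k) B)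
  (fun k => upper_inv (f k) B level) level
  (fun k eps kks eps0 => lower_inv_approx_right B0 level eps0 (f_mono kks))
  ((B - upper_sum level) / 2) ltac:(lra).
set v := Rmin (f k0 B) ((level + w) / 2).
have lev_v : level < v by apply: Rmin_glb_lt; lra.
have v_w : v < w by apply: Rle_lt_trans (Rmin_r _ _) _; lra.
have : admissible v.
  split; first by have := Rmin_l (f k0 B) ((level + w) / 2); rewrite -/v; lra.
  by have := near v v_w; rewrite /lower_sum /upper_sum in lt_B *; lra.
by move=> /ub; lra.
Qed.

End LevelSupremum.

Lemma equalization_extends : exists v (x : X -> R),
  (forall k, k \in ks -> 0 <= x k /\ f k (x k) = v) /\ sumR ks x = B.
Proof.
have [k0 k0_ks k0_min] := exists_min_seq (fun k => f k B) ks_ne.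
have [e_lev lev_top] := level_range k0_ks.
set level := supR _ in e_lev lev_top *.
have [x x_range xB] := @sumR_interpolate _ ks (fun k => lower_inv (f k) B level)
  (fun k => upper_inv (f k) B level) B ks_uniq
  (fun k _ => lower_inv_le_upper_inv (f k) B0 level)
  (conj (lower_sum_level k0_ks) (upper_sum_level k0_ks)).
exists level, x; split=> // k kks.
have [l0 _] := lower_inv_bounds (f k) B0 level.
split; first by have := x_range k kks; lra.
apply: (@inverse_interval_level (f k) B B0); [exact: f_mono|exact: f_cont| |exact: x_range].
have := cost0_le_e kks; have := k0_min k kks; lra.
Qed.

End Equalization.

Lemma valid_game_mono n (G : game n) k : valid_game G -> monotone_nonneg (cost G k).
Proof. by case=> mono _ x y; apply: mono. Qed.

Lemma sum_mu_ge0 n (G : game n) P : valid_game G -> 0 <= sum_mu G P.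
Proof.
by case=> _ mass0; apply: sumR_ge0 => Rs; rewrite mem_enum inE => /andP [/mass0].
Qed.

Lemma eq_sum_mu n (G : game n) P P' : P =1 P' -> sum_mu G P = sum_mu G P'.
Proof. by move=> PP'; rewrite /sum_mu; congr sumR; apply: eq_enum => Rs; rewrite !inE PP'. Qed.

Lemma sum_mu_split n (G : game n) P Q :
  sum_mu G P = sum_mu G (fun Rs => P Rs && Q Rs) + sum_mu G (fun Rs => P Rs && ~~ Q Rs).
Proof.
rewrite /sum_mu !sumR_enum -sumR_add; apply: eq_sumR => Rs _; rewrite !inE.
by case: (Rs != set0); case: (P Rs); case: (Q Rs) => /=; lra.
Qed.

Lemma sum_mu_sub0 n (G : game n) : sum_mu G (fun Rs => Rs \subset set0) = 0.
Proof.
by apply: sumR_eq0 => Rs; rewrite mem_enum inE subset0 andNb.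
Qed.

Lemma enum_set_neq0 (T : finType) (S : {set T}) : S != set0 -> enum S <> [::].
Proof. by case/set0Pn=> x xS enum0; rewrite -mem_enum enum0 in xS. Qed.

Lemma eqv_Some_is_eq n (g : 'I_n -> R -> R) S m v : eqv g S m = Some v -> is_eq g S m v.
Proof.
rewrite /eqv; case: excluded_middle_informative => // h [<-].
by case: (constructive_indefinite_description _ h).
Qed.

Section EqualizationLevel.
Variables (n : nat) (g : 'I_n -> R -> R) (S : {set 'I_n}).
Hypotheses (S_ne : S != set0) (g_mono : forall k, k \in S -> monotone_nonneg (g k)).

Lemma is_eq_mass_lt m m' v w : is_eq g S m v -> is_eq g S m' w -> v < w -> m < m'.
Proof.
move=> [x [x0 [<- xv]]] [x' [x'0 [<- x'w]]] vw.
apply: ltr_sumR => [|k]; first exact: enum_set_neq0.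
rewrite mem_enum => kS; apply: Rnot_le_lt => x'x.
have := g_mono kS (x'0 k kS) x'x; rewrite xv // x'w //; lra.
Qed.

Lemma is_eq_unique m v w : is_eq g S m v -> is_eq g S m w -> v = w.
Proof.
move=> eq_v eq_w; apply: Rle_antisym; apply: Rnot_lt_le => lt_vw.
- by have := is_eq_mass_lt eq_w eq_v lt_vw; lra.
- by have := is_eq_mass_lt eq_v eq_w lt_vw; lra.
Qed.

Lemma eqvP m v : eqv g S m = Some v <-> is_eq g S m v.
Proof.
split=> [|eq_v]; first exact: eqv_Some_is_eq.
rewrite /eqv; case: excluded_middle_informative => [h|[]]; last by exists v.
case: (constructive_indefinite_description _ h) => w eq_w /=.
by rewrite (is_eq_unique eq_w eq_v).
Qed.

End EqualizationLevel.

Lemma in_M_G_mass_excess n (G : game n) S S' M :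
  valid_game G -> E_G G S = Some M -> in_M_G G S S' ->
  exists2 mu : 'I_n -> R,
    (forall k, k \in S :\: S' -> 0 <= mu k /\ cost G k (mu k) = M)
    & sumR (enum (S :\: S')) mu < sum_mu G (fun Rs => Rs \subset S :\: S').
Proof.
move=> valid ESM [S'_ne [S'S never_M]].
have [mu [mu0 [mu_sum mu_M]]] := eqv_Some_is_eq ESM.
have S'_in_S k : k \in S' -> k \in S by apply: (subsetP S'S).
exists mu => [k /setDP [kS _]|]; first by split; [apply: mu0|apply: mu_M].
set a := sumR (enum S') mu.
have a0 : 0 <= a by apply: sumR_ge0 => k; rewrite mem_enum => /S'_in_S /mu0.
have eqv_a : eqv (cost G) S' a = Some M.
  apply/eqvP => // [k _|]; first exact: valid_game_mono.
  by exists mu; split=> [k /S'_in_S /mu0 //|]; split=> // k /S'_in_S /mu_M.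
have meet_lt_a :
    sum_mu G (fun Rs => (Rs \subset S) && (Rs :&: S' != set0)) < a.
  by apply: Rnot_le_lt => le_a; apply: (never_M a a0 le_a); rewrite eqv_a ESM.
have split_masses : sum_mu G (fun Rs => Rs \subset S) =
    sum_mu G (fun Rs => (Rs \subset S) && (Rs :&: S' != set0))
    + sum_mu G (fun Rs => Rs \subset S :\: S').
  rewrite (sum_mu_split G _ (fun Rs => Rs :&: S' != set0)); congr (_ + _).
  by apply: eq_sum_mu => Rs; rewrite subsetD negbK setI_eq0.
have split_mu : sumR (enum S) mu = a + sumR (enum (S :\: S')) mu.
  rewrite /a !sumR_enum -sumR_add; apply: eq_sumR => k _; rewrite in_setD.
  by case kS': (k \in S'); [rewrite (S'_in_S _ kS') /=|case: (k \in S)] => /=; lra.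
rewrite mu_sum in split_mu; lra.
Qed.

Lemma E_G_setD_max n (G : game n) S S' M :
  valid_game G -> (forall j, continuous_on_nonneg (cost G j)) ->
  E_G G S = Some M -> (forall T v, T != set0 -> E_G G T = Some v -> v <= M) ->
  in_M_G G S S' -> S :\: S' != set0 /\ E_G G (S :\: S') = Some M.
Proof.
move=> valid cont ESM M_max S'_in.
have [mu mu_M mu_lt] := in_M_G_mass_excess valid ESM S'_in.
set T := S :\: S' in mu_M mu_lt *.
have T_ne : T != set0.
  apply/negP => /eqP T0; move: mu_lt.
  by rewrite T0 enum_set0 sumR_nil sum_mu_sub0; apply: Rlt_irrefl.
have mono k : k \in T -> monotone_nonneg (cost G k) by move=> _; apply: valid_game_mono.
have [v [x [x_v x_sum]]] := @equalization_extends _ (cost G) (enum T)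
  (sum_mu G (fun Rs => Rs \subset T)) M mu (enum_set_neq0 T_ne) (enum_uniq _)
  (fun k _ => valid_game_mono k valid) (fun k _ => cont k)
  (fun k kT => mu_M k ltac:(by rewrite -mem_enum)) (Rlt_le _ _ mu_lt).
have ETv : E_G G T = Some v.
  apply/eqvP => //; exists x; split=> [k kT|]; first by case: (x_v k); rewrite ?mem_enum.
  by split=> // k kT; case: (x_v k); rewrite ?mem_enum.
split=> //; rewrite ETv; congr Some; apply: Rle_antisym; first exact: M_max ETv.
apply: Rnot_lt_le => lt_vM.
have eq_mu : is_eq (cost G) T (sumR (enum T) mu) M.
  by exists mu; split=> [k /mu_M [] //|]; split=> // k /mu_M [].
have := is_eq_mass_lt T_ne mono (eqv_Some_is_eq ETv) eq_mu lt_vM; lra.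
Qed.

Section MaxOption.
Variables (X : eqType) (F : X -> option R).

Lemma maxoptL_None s : maxoptL (map F s) = None -> forall x, x \in s -> F x = None.
Proof.
elim: s => [//|y s IH] /=.
case Fy: (F y) => [a|]; case: (maxoptL _) IH => [b|] IH //= sNone x.
by rewrite in_cons => /orP [/eqP ->|/(IH sNone)].
Qed.

Lemma maxoptL_Some s M : maxoptL (map F s) = Some M ->
  (forall x v, x \in s -> F x = Some v -> v <= M) /\ exists2 x, x \in s & F x = Some M.
Proof.
elim: s M => [//|y s IH] M /=.
have in_s x : x \in s -> x \in y :: s by move=> xs; rewrite in_cons xs orbT.
case Fy: (F y) => [a|]; case sM: (maxoptL _) => [b|] //= [<-].
- have [ub [x xs Fx]] := IH b sM.
  split=> [x' v|].
    rewrite in_cons => /orP [/eqP ->|/ub ub']; first by rewrite Fy => -[<-]; apply: Rmax_l.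
    by move=> /ub' le_b; apply: Rle_trans (Rmax_r _ _).
  by rewrite /Rmax; case: Rle_dec => _; [exists x; rewrite ?in_s|exists y; rewrite ?mem_head].
- split=> [x v|]; last by exists y; rewrite ?mem_head.
  rewrite in_cons => /orP [/eqP ->|xs]; first by rewrite Fy => -[<-]; apply: Rle_refl.
  by rewrite (maxoptL_None sM xs).
- have [ub [x xs Fx]] := IH _ sM.
  split=> [x' v|]; last by exists x; rewrite ?in_s.
  rewrite in_cons => /orP [/eqP ->|x's]; last exact: ub x's.
  by rewrite Fy.
Qed.

Lemma maxoptL_defined s x v : x \in s -> F x = Some v -> exists M, maxoptL (map F s) = Some M.
Proof.
move=> xs Fx; case sM: (maxoptL _) => [M|]; first by exists M.
by rewrite (maxoptL_None sM xs) in Fx.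
Qed.

Lemma maxoptL_attained s x M : x \in s -> F x = Some M ->
  (forall y v, y \in s -> F y = Some v -> v <= M) -> maxoptL (map F s) = Some M.
Proof.
move=> xs FxM ub; have [M' sM'] := maxoptL_defined xs FxM.
have [ub' [y ys FyM']] := maxoptL_Some sM'.
by rewrite sM'; congr Some; apply: Rle_antisym; [apply: ub ys FyM'|apply: ub' xs FxM].
Qed.

End MaxOption.

Lemma mem_nonempty_sets n (S : {set 'I_n}) :
  (S \in [seq T <- enum [set: {set 'I_n}] | T != set0]) = (S != set0).
Proof. by rewrite mem_filter mem_enum inE andbT. Qed.

Lemma mem_D_G_sets n (G : game n) S :
  (S \in [seq T <- enum [set: {set 'I_n}] | in_D_Gb G T]) <-> in_D_G G S.
Proof.
rewrite mem_filter mem_enum inE andbT /in_D_Gb.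
by case: excluded_middle_informative.
Qed.

Lemma maxE_defined n (G : game n) : (0 < n)%N -> valid_game G -> exists v, maxE G = Some v.
Proof.
move=> n_gt0 valid; set j := Ordinal n_gt0.
set m := sum_mu G (fun Rs => Rs \subset [set j]).
have Ej : E_G G [set j] = Some (cost G j m).
  apply/eqvP => [|k _|]; [by apply/set0Pn; exists j; rewrite inE|exact: valid_game_mono|].
  exists (fun _ => m); split=> [k _|]; first exact: sum_mu_ge0.
  by rewrite enum_set1 sumR_cons sumR_nil Rplus_0_r; split=> // k /set1P ->.
by apply: (maxoptL_defined _ Ej); rewrite mem_nonempty_sets; apply/set0Pn; exists j; rewrite inE.
Qed.

Lemma D_G_attains_max n (G : game n) M :
  valid_game G -> (forall j, continuous_on_nonneg (cost G j)) -> maxE G = Some M ->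
  exists2 S, in_D_G G S & E_G G S = Some M.
Proof.
move=> valid cont /maxoptL_Some [ub [S0 S0_ne ES0]].
rewrite mem_nonempty_sets in S0_ne.
have M_max T v : T != set0 -> E_G G T = Some v -> v <= M.
  by move=> T_ne; apply: ub; rewrite mem_nonempty_sets.
elim: {S0}_.+1 {-2}S0 (ltnSn #|S0|) S0_ne ES0 => [//|N IH] S S_N S_ne ESM.
have [S_D|S_notD] := classic (in_D_G G S); first by exists S.
have [S' S'_in] : exists S', in_M_G G S S'.
  by apply: NNPP => no_S'; apply: S_notD; split=> //; split; [exists M|].
have [T_ne ETM] := E_G_setD_max valid cont ESM M_max S'_in.
apply: (IH (S :\: S')) => //.
have [S'_ne [S'S _]] := S'_in.
rewrite cardsD (setIidPr S'S); have := card_gt0 S'; rewrite S'_ne.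
move: S_N (subset_leq_card S'S); lia.
Qed.

Theorem mainTheorem17 (n : nat) (G : game n) :
  (0 < n)%N -> valid_game G ->
  (exists v : R, maxE G = Some v) /\
  ((forall j : 'I_n, continuous_on_nonneg (cost G j)) -> h_G G = maxE G).
Proof.
move=> n_gt0 valid; have [M maxEM] := maxE_defined n_gt0 valid.
split=> [|cont]; first by exists M.
have [S S_D ESM] := D_G_attains_max valid cont maxEM.
have [ub _] := maxoptL_Some maxEM.
rewrite maxEM; apply: (maxoptL_attained (x := S)) => //; first exact/mem_D_G_sets.
move=> T v /mem_D_G_sets [T_ne _] ETv.
by apply: ub ETv; rewrite mem_nonempty_sets.
Qed.
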